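(* Let $E$ be a real topological vector space, $f:E\to\mathbb{R}$ and $x\in E$. If $f$ is $D^-_M$-differentiable at $x$, then $D^-_Mf(x):E\to\mathbb{R}$ is a superlinear functional, and $D^-f(x)$ is superlinear if and only if $D^-f(x)=D^-_Mf(x)$. Similarly, if $f$ is $D^+_M$-differentiable at $x$, then $D^+_Mf(x)$ is a sublinear functional, and $D^+f(x)$ is sublinear if and only if $D^+f(x)=D^+_Mf(x)$.
   Context: $D^-f(x)(u):=\liminf_{t\to0^+}\frac{f(x+tu)-f(x)}{t}$ and $D^+f(x)(u):=\limsup_{t\to0^+}\frac{f(x+tu)-f(x)}{t}$, with $D^-f(x)(0)=D^+f(x)(0)=0$. $D^-_Mf(x)(u):=\inf_{w\in E}\{D^-f(x)(u+w)-D^-f(x)(w)\}$ and $D^+_Mf(x)(u):=\sup_{w\in E}\{D^+f(x)(u+w)-D^+f(x)(w)\}$. $f$ is $D^-_M$-differentiable (resp. $D^+_M$-differentiable) at $x$ if $D^-_Mf(x)(u)$ and $D^-f(x)(u)$ (resp. $D^+_Mf(x)(u)$ and $D^+f(x)(u)$) are finite for all $u\in E$. A map $p:E\to\mathbb{R}$ is sublinear if $p(x+y)\le p(x)+p(y)$ and $p(\lambda x)=\lambda p(x)$ for all $x,y\in E$, $\lambda\ge0$; superlinear if $-p$ is sublinear. *)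

From HB Require Import structures.
From mathcomp Require Import all_boot all_order all_algebra.
From mathcomp Require Import all_classical all_reals all_analysis.
Set Implicit Arguments. Unset Strict Implicit. Unset Printing Implicit Defensive.
Import Order.TTheory GRing.Theory Num.Theory.
Local Open Scope ring_scope.
Local Open Scope classical_set_scope.

Section Dini.
Variables (R : realType) (E : topologicalLmodType R).

Definition dini_lower (f : E -> R) (x u : E) : \bar R :=
  if u == 0 then 0%E
  else @limf_einf R R^o R (fun t : R => ((f (x + t *: u) - f x) / t)%:E) (0^'+).

Definition dini_upper (f : E -> R) (x u : E) : \bar R :=
  if u == 0 then 0%E
  else @limf_esup R R^o R (fun t : R => ((f (x + t *: u) - f x) / t)%:E) (0^'+).

Definition dini_lowerM (f : E -> R) (x u : E) : \bar R :=
  ereal_inf [set (dini_lower f x (u + w)%R - dini_lower f x w)%E | w in [set: E]].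

Definition dini_upperM (f : E -> R) (x u : E) : \bar R :=
  ereal_sup [set (dini_upper f x (u + w)%R - dini_upper f x w)%E | w in [set: E]].

Definition lowerM_differentiable (f : E -> R) (x : E) : Prop :=
  forall u, (dini_lowerM f x u \is a fin_num) /\ (dini_lower f x u \is a fin_num).

Definition upperM_differentiable (f : E -> R) (x : E) : Prop :=
  forall u, (dini_upperM f x u \is a fin_num) /\ (dini_upper f x u \is a fin_num).

(* sublinear / superlinear extended-real-valued functionals (values are finite
   in all uses below) *)
Definition sublinear (p : E -> \bar R) : Prop :=
  (forall y z : E, (p (y + z)%R <= p y + p z)%E) /\
  (forall (l : R) (y : E), 0 <= l -> p (l *: y)%R = (l%:E * p y)%E).

Definition superlinear (p : E -> \bar R) : Prop :=
  sublinear (fun y => - p y)%E.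

End Dini.

(* Both Dini derivatives are positively homogeneous in the direction, because
   t |-> l t maps the filter 0^'+ onto itself.  For a finite, positively
   homogeneous g, the functional infM g u = inf_w (g (u + w) - g w) is
   superadditive (telescope g (y + z + w) - g w through g (z + w)) and
   positively homogeneous (substitute w |-> l w), hence superlinear.  If g is
   itself superlinear then g u <= g (u + w) - g w for every w, while w = 0 gives
   infM g u <= g u; so g = infM g.  The upper case is the lower one applied to
   -g, since supM g = - infM (- g). *)

From HB Require Import structures.
From mathcomp Require Import all_boot all_order all_algebra.
From mathcomp Require Import all_classical all_reals all_analysis.
From mathcomp Require Import lra.
Import Order.TTheory GRing.Theory Num.Theory.
Local Open Scope ring_scope.
Local Open Scope classical_set_scope.

Section limf_esup_lemmas.
Context {R : realType} {T U : choiceType}.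
Context {X : filteredType T} {Y : filteredType U}.
Local Open Scope ereal_scope.

Lemma limf_esup_comp (f : Y -> \bar R) (h : X -> Y) (F : set_system X) :
  Filter F -> limf_esup (f \o h) F = limf_esup f (h @ F).
Proof.
move=> FF; apply/eqP; rewrite eq_le; apply/andP; split.
- apply/ereal_infP => _ [W FW <-]; apply: le_trans (ereal_inf_lbound _) _.
    by exists (h @^-1` W).
  by apply: ereal_sup_le => _ [t Wt <-]; exists (h t).
- apply/ereal_infP => _ [V FV <-]; apply: le_trans (ereal_inf_lbound _) _.
    exists (h @` V); last by rewrite image_comp.
    by apply: (@filterS _ F _ V) => // t Vt; exists t.
  exact: lexx.
Qed.

Lemma limf_esup_pZl (f : X -> \bar R) (F : set_system X) (l : R) : (0 < l)%R ->
  limf_esup (fun t => l%:E * f t) F = l%:E * limf_esup f F.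
Proof.
move=> l_gt0; rewrite /limf_esup -ereal_inf_pZl // image_comp.
congr ereal_inf; apply: eq_imagel => V _ /=.
by rewrite -ereal_sup_pZl // image_comp.
Qed.

End limf_esup_lemmas.

Lemma at_right_scale {R : realType} {l : R} : 0 < l ->
  (fun t => l * t) @ 0^'+ --> (0 : R)^'+.
Proof.
move=> l_gt0 W /nbhs_ballP [e e_gt0 eW]; apply/nbhs_ballP.
exists (e / l); first exact: divr_gt0.
move=> t; rewrite /ball /= !sub0r !normrN ltr_pdivlMr // => te t_gt0.
apply: eW; last exact: mulr_gt0.
by rewrite /ball_ /= sub0r normrN normrM (gtr0_norm l_gt0) mulrC.
Qed.

Lemma at_right_scaleE {R : realType} {l : R} : 0 < l ->
  (fun t => l * t) @ 0^'+ = (0 : R)^'+.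
Proof.
move=> l_gt0; apply/seteqP; split; last exact: at_right_scale.
have li_gt0 : 0 < l^-1 by rewrite invr_gt0.
move=> W /(at_right_scale li_gt0); apply: (@filterS _ (0^'+)) => t /=.
by rewrite mulrA mulfV ?gt_eqF // mul1r.
Qed.

Section dini_homogeneity.
Context {R : realType} {E : topologicalLmodType R}.
Implicit Types (f : E -> R) (x u : E).
Local Open Scope ereal_scope.

Lemma dini_lowerN f x u :
  dini_lower f x u = - dini_upper (fun y => - f y)%R x u.
Proof.
rewrite /dini_lower /dini_upper; case: eqP => _; first by rewrite oppe0.
congr (- limf_esup _ _); apply/funext => t /=.
by rewrite -mulNr opprB opprK addrC.
Qed.

Lemma dini_upper_pZ f x (l : R) u : (0 < l)%R ->
  dini_upper f x (l *: u) = l%:E * dini_upper f x u.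
Proof.
move=> l_gt0; rewrite /dini_upper scaler_eq0 (gt_eqF l_gt0) /=.
case: eqP => _; first by rewrite mule0.
rewrite -limf_esup_pZl // -[in RHS](at_right_scaleE l_gt0).
rewrite -(@limf_esup_comp _ _ _ R^o R^o).
congr limf_esup; apply/funext => t /=; rewrite -EFinM scalerA; congr EFin.
by rewrite [(t * l)%R]mulrC invfM mulrCA mulVKf ?gt_eqF.
Qed.

Lemma dini_lower_pZ f x (l : R) u : (0 < l)%R ->
  dini_lower f x (l *: u) = l%:E * dini_lower f x u.
Proof. by move=> l_gt0; rewrite !dini_lowerN dini_upper_pZ // muleN. Qed.

End dini_homogeneity.

Section infM_supM.
Context {R : realType} {E : topologicalLmodType R}.
Local Open Scope ereal_scope.

Definition infM (g : E -> \bar R) (u : E) : \bar R :=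
  ereal_inf [set g (u + w)%R - g w | w in [set: E]].

Definition supM (g : E -> \bar R) (u : E) : \bar R :=
  ereal_sup [set g (u + w)%R - g w | w in [set: E]].

Lemma infM_le (g : E -> \bar R) u w : infM g u <= g (u + w)%R - g w.
Proof. by apply: ereal_inf_lbound; exists w. Qed.

Lemma supME (g : E -> \bar R) : (forall u, g u \is a fin_num) ->
  supM g = \- infM (\- g).
Proof.
move=> g_fin; apply/funext => u; rewrite /infM ereal_infEN oppeK image_comp.
congr ereal_sup; apply: eq_imagel => w _ /=.
by rewrite oppeB ?fin_num_adde_defl ?fin_numN // oppeK.
Qed.

Section infM_theory.
Variable g : E -> \bar R.
Hypothesis g_fin : forall u, g u \is a fin_num.
Hypothesis gZ : forall (l : R) u, (0 < l)%R -> g (l *: u) = l%:E * g u.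

Let g0 : g 0%R = 0.
Proof.
have := @gZ 2%:R 0%R (ltr0Sn R 1); rewrite scaler0 -(fineK (g_fin 0%R)) -EFinM.
move=> [g0E]; congr EFin; lra.
Qed.

Lemma infM_superadditive y z : infM g y + infM g z <= infM g (y + z)%R.
Proof.
apply/ereal_infP => _ [w _ <-]; rewrite -addrA.
have -> : g (y + (z + w))%R - g w =
           (g (y + (z + w))%R - g (z + w)%R) + (g (z + w)%R - g w).
  by rewrite addeA subeK.
exact: leeD (infM_le _ _ _) (infM_le _ _ _).
Qed.

Lemma infM0 : infM g 0%R = 0.
Proof.
apply/eqP; rewrite eq_le; apply/andP; split.
  by have := infM_le g 0%R 0%R; rewrite addr0 subee.
by apply/ereal_infP => _ [w _ <-]; rewrite add0r subee.
Qed.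

Lemma infM_pZ (l : R) u : (0 < l)%R -> infM g (l *: u)%R = l%:E * infM g u.
Proof.
move=> l_gt0; have l_neq0 : l != 0%R by rewrite gt_eqF.
rewrite /infM -ereal_inf_pZl // image_comp; congr ereal_inf.
apply/seteqP; split => _ [w _ <-] /=; last first.
  exists (l *: w) => //.
  by rewrite muleBr ?fin_num_adde_defl ?fin_numN // -!gZ // scalerDr.
exists (l^-1 *: w) => //.
by rewrite muleBr ?fin_num_adde_defl ?fin_numN // -!gZ // scalerDr scalerKV.
Qed.

Hypothesis infM_fin : forall u, infM g u \is a fin_num.

Lemma infM_superlinear : superlinear (infM g).
Proof.
split=> [y z|l y].
  by rewrite -oppeD ?fin_num_adde_defl // leeN2 infM_superadditive.
rewrite le_eqVlt => /predU1P [<-|l_gt0].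
  by rewrite scale0r infM0 mul0e oppe0.
by rewrite infM_pZ // -muleN.
Qed.

Lemma superlinear_iff_infM : superlinear g <-> g = infM g.
Proof.
split=> [[g_subN _]|->]; last exact: infM_superlinear.
have g_superadd y z : g y + g z <= g (y + z)%R.
  by rewrite -leeN2 oppeD ?fin_num_adde_defl // g_subN.
apply/funext => u; apply/eqP; rewrite eq_le; apply/andP; split.
  by apply/ereal_infP => _ [w _ <-]; rewrite leeBrDr.
by have := infM_le g u 0%R; rewrite addr0 g0 sube0.
Qed.

End infM_theory.

Section supM_theory.
Variable g : E -> \bar R.
Hypothesis g_fin : forall u, g u \is a fin_num.
Hypothesis gZ : forall (l : R) u, (0 < l)%R -> g (l *: u) = l%:E * g u.
Hypothesis supM_fin : forall u, supM g u \is a fin_num.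

Let gN_fin u : (\- g) u \is a fin_num.
Proof. by rewrite fin_numN. Qed.

Let gNZ (l : R) u : (0 < l)%R -> (\- g) (l *: u) = l%:E * (\- g) u.
Proof. by move=> l_gt0; rewrite /= gZ // muleN. Qed.

Let infMN_fin u : infM (\- g) u \is a fin_num.
Proof. by have := supM_fin u; rewrite supME // fin_numN. Qed.

Lemma supM_sublinear : sublinear (supM g).
Proof. by rewrite supME //; exact: infM_superlinear. Qed.

Lemma sublinear_iff_supM : sublinear g <-> g = supM g.
Proof.
have gNN : \- (\- g) = g by apply/funext => u; rewrite oppeK.
have g_sub : sublinear g <-> superlinear (\- g) by rewrite /superlinear gNN.
rewrite g_sub superlinear_iff_infM // supME //.
split=> [gNE | gE]; apply/funext => u /=; first by rewrite -gNE oppeK.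
by rewrite {1}gE oppeK.
Qed.

End supM_theory.

End infM_supM.

Theorem proposition2p2 (R : realType) (E : topologicalLmodType R)
  (f : E -> R) (x : E) :
  (lowerM_differentiable f x ->
     superlinear (dini_lowerM f x) /\
     (superlinear (dini_lower f x) <-> dini_lower f x = dini_lowerM f x)) /\
  (upperM_differentiable f x ->
     sublinear (dini_upperM f x) /\
     (sublinear (dini_upper f x) <-> dini_upper f x = dini_upperM f x)).
Proof.
(* dini_lowerM f x and dini_upperM f x are convertible to
   infM (dini_lower f x) and supM (dini_upper f x). *)
split=> D.
  have lower_fin u := (D u).2; have lowerM_fin u := (D u).1.
  have lowerZ := @dini_lower_pZ R E f x.
  split; first exact: infM_superlinear _ lower_fin lowerZ lowerM_fin.
  exact: superlinear_iff_infM _ lower_fin lowerZ lowerM_fin.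
have upper_fin u := (D u).2; have upperM_fin u := (D u).1.
have upperZ := @dini_upper_pZ R E f x.
split; first exact: supM_sublinear _ upper_fin upperZ upperM_fin.
exact: sublinear_iff_supM _ upper_fin upperZ upperM_fin.
Qed.
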